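(* Suppose $\|\widehat\theta_t-\theta^*\|_{\Sigma_t}\le\beta_t$ for all $t\in[T]$ (with $\|\theta^*\|_2\le L_\theta$). If the underlying MDP has diameter at most $D$, then for each episode $k$ of \texttt{UCMNLK}, $\max_{s\in\mathcal S}V_k(s)-\min_{s\in\mathcal S}V_k(s)\le D$.
   Context: Setting as for \texttt{UCMNLK}: finite $\mathcal S,\mathcal A$, reward $r\in[0,1]$, true transitions $p(s'\mid s,a,\theta^* )$ of MNL form $p(s'\mid s,a,\theta)=\exp(\varphi(s,a,s')^\top\theta)/\sum_{s''\in\mathcal S_{s,a}}\exp(\varphi(s,a,s'')^\top\theta)$ on known sets $\mathcal S_{s,a}$. $\mathcal P_t$ is the confidence polytope: all $p\in[0,1]^{\mathcal S\times\mathcal A\times\mathcal S}$ with $\sum_{s'\in\mathcal S_{s,a}}p_{s,a,s'}=1$ and $\sum_{s'\in\mathcal S_{s,a}}|p_{s,a,s'}-p(s'\mid s,a,\widehat\theta_t)|\le\beta_t\sum_{s'}p(s'\mid s,a,\widehat\theta_t)\|\varphi(s,a,s')-\sum_{s''}p(s''\mid s,a,\widehat\theta_t)\varphi(s,a,s'')\|_{\Sigma_t^{-1}}+3\beta_t^2\max_{s'}\|\varphi(s,a,s')\|^2_{\Sigma_t^{-1}}$ for all $(s,a)$, where $\widehat\theta_t,\Sigma_t$ are the online estimator's iterates. $Q_k$ is the output of \texttt{DEVI}$(\gamma,\mathcal P_{t_k},N)$ ($Q^{(0)}\equiv1/(1-\gamma)$; $V^{(n-1)}(s)=\max_aQ^{(n-1)}(s,a)$;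 $Q^{(n)}(s,a)=r(s,a)+\gamma\max_{p\in\mathcal P_{t_k}}\sum_{s'\in\mathcal S_{s,a}}p_{s,a,s'}V^{(n-1)}(s')$; $Q_k=Q^{(N)}$), with $\gamma\in[0,1)$, and $V_k(s)=\max_aQ_k(s,a)$. Diameter of the MDP: $\max_{s\ne s'}\min_{\pi}\mathbb E[\text{number of steps to first reach }s'\text{ from }s\text{ under deterministic stationary }\pi]$. *)

From HB Require Import structures.
From mathcomp Require Import all_boot all_order all_algebra.
From mathcomp Require Import all_classical all_reals all_analysis.
Set Implicit Arguments. Unset Strict Implicit. Unset Printing Implicit Defensive.
Import Order.TTheory GRing.Theory Num.Theory.
Local Open Scope ring_scope.

Section UCMNLK.
Context {R : realType} {S A : finType} {d : nat}.

Definition dotv (u v : 'cV[R]_d) : R := (u^T *m v) 0 0.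

Definition mnorm (M : 'M[R]_d) (x : 'cV[R]_d) : R := Num.sqrt ((x^T *m M *m x) 0 0).

Definition norm2 (x : 'cV[R]_d) : R := Num.sqrt (dotv x x).

Definition posdef (M : 'M[R]_d) : Prop :=
  M^T = M /\ forall x : 'cV[R]_d, x != 0 -> 0 < (x^T *m M *m x) 0 0.

Definition mnl (phi : S -> A -> S -> 'cV[R]_d) (Sset : S -> A -> {set S})
  (theta : 'cV[R]_d) (s : S) (a : A) (s' : S) : R :=
  if s' \in Sset s a then
    expR (dotv (phi s a s') theta) /
      \sum_(s'' in Sset s a) expR (dotv (phi s a s'') theta)
  else 0.

Definition in_polytope (phi : S -> A -> S -> 'cV[R]_d) (Sset : S -> A -> {set S})
  (thetahat : 'cV[R]_d) (Sigma : 'M[R]_d) (beta : R) (p : S -> A -> S -> R) : Prop :=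
  (forall s a s', 0 <= p s a s' <= 1) /\
  forall s a,
    \sum_(s' in Sset s a) p s a s' = 1 /\
    \sum_(s' in Sset s a) `|p s a s' - mnl phi Sset thetahat s a s'|
      <= beta * \sum_(s' in Sset s a) mnl phi Sset thetahat s a s' *
              mnorm (invmx Sigma)
                (phi s a s' - \sum_(s'' in Sset s a) mnl phi Sset thetahat s a s'' *: phi s a s'')
         + 3 * beta ^+ 2 *
           \big[Num.max/0]_(s' in Sset s a) (mnorm (invmx Sigma) (phi s a s')) ^+ 2.

Fixpoint devi_Q (r : S -> A -> R) (Sset : S -> A -> {set S})
  (P : (S -> A -> S -> R) -> Prop) (gamma : R) (n : nat) : S -> A -> R :=
  match n with
  | 0 => fun _ _ => 1 / (1 - gamma)
  | n'.+1 =>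
      let V := fun s => \big[Num.max/0]_(a : A) devi_Q r Sset P gamma n' s a in
      fun s a => r s a + gamma *
        sup [set x : R | exists p, P p /\ x = \sum_(s' in Sset s a) p s a s' * V s']
  end.

Definition devi_V (r : S -> A -> R) (Sset : S -> A -> {set S})
  (P : (S -> A -> S -> R) -> Prop) (gamma : R) (N : nat) (s : S) : R :=
  \big[Num.max/0]_(a : A) devi_Q r Sset P gamma N s a.

(* surv P g n x = Pr_x(X_0,...,X_n all differ from g) for the chain with kernel P *)
Fixpoint surv (P : S -> S -> R) (g : S) (n : nat) (x : S) : R :=
  match n with
  | 0 => if x == g then 0 else 1
  | n'.+1 => if x == g then 0 else \sum_(y : S) P x y * surv P g n' y
  end.

(* expected first hitting time of g from s: E[tau] = sum_{n>=0} Pr(tau > n) *)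
Definition hit_time (P : S -> S -> R) (s g : S) : \bar R :=
  (\sum_(0 <= n <oo) (surv P g n s)%:E)%E.

Definition diameter (ptrue : S -> A -> S -> R) : \bar R :=
  \big[Order.max/0%E]_(s : S) \big[Order.max/0%E]_(g : S | g != s)
    \big[Order.min/+oo%E]_(pi : {ffun S -> A})
       hit_time (fun x y => ptrue x (pi x) y) s g.

End UCMNLK.

From HB Require Import structures.
From mathcomp Require Import all_boot all_order all_algebra.
From mathcomp Require Import all_classical all_reals all_analysis.
From mathcomp Require Import ring lra.
Set Implicit Arguments. Unset Strict Implicit. Unset Printing Implicit Defensive.
Import Order.TTheory GRing.Theory Num.Theory.
Local Open Scope ring_scope.

(* The true kernel p(.|.,.,theta* ) lies in every confidence polytope: the L1
   distance between two softmax distributions is at most the centred first-order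
   term plus three times the largest squared logit gap, and the logit gaps are
   controlled by ||thetahat - theta*||_Sigma <= beta through Cauchy-Schwarz.
   Hence DEVI is optimistic with respect to p*: its iterates V^(n) decrease in n,
   stay below 1/(1 - gamma), and dominate one-step backups under p* with any
   policy pi.  By induction on n, V^(n) g - E_x[min (tau_g, n)] <= V^(n) x, where
   tau_g is the hitting time of g under pi; a policy reaching s from s' in
   expected time at most D then gives V s - V s' <= D. *)

Section ExpBound.
Context {R : realType}.

(* With y = 8 t: expR y = (expR t)^8 <= (1 - t)^-8, and
   (1 + 8 t + 96 t^2) (1 - t)^8 = 1 + t^2 Q(t) with Q >= 0 on [0, 41/200];
   note 8 * 41/200 > sqrt (8/3). *)
Lemma expR_le_quadratic (y : R) : 0 <= y -> y ^+ 2 <= 8 / 3 ->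
  expR y <= 1 + y + 3 / 2 * y ^+ 2.
Proof.
move=> y0 y2; set t := y / 8.
have t0 : 0 <= t by rewrite /t; lra.
have t1 : t <= 41 / 200 by rewrite /t; nra.
have t1' : 0 < 1 - t by lra.
have -> : y = 8%:R * t by rewrite /t; field.
have expR_le_inv : expR t <= (1 - t)^-1.
  have : 1 - t <= (expR t)^-1 by rewrite -expRN; have := expR_ge1Dx (- t); lra.
  by move=> h; rewrite -[expR t]invrK lef_pV2 ?posrE ?invr_gt0 ?expR_gt0.
have inv_ge0 : 0 <= (1 - t)^-1 by rewrite invr_ge0 ltW.
rewrite expRM_natl; apply: le_trans (lerXn2r 8 _ _ expR_le_inv) _;
  rewrite ?nnegrE ?expR_ge0 //.
set Q := 60 - 600 * t + 2310 * t ^+ 2 - 4872 * t ^+ 3 + 6300 * t ^+ 4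
  - 5160 * t ^+ 5 + 2625 * t ^+ 6 - 760 * t ^+ 7 + 96 * t ^+ 8.
have Q_ge0 : 0 <= Q by rewrite /Q; nra.
have -> : 1 + 8%:R * t + 3 / 2 * (8%:R * t) ^+ 2 = (1 + t ^+ 2 * Q) / (1 - t) ^+ 8.
  by rewrite /Q; field; lra.
rewrite exprVn -[X in X <= _]mul1r ler_pM2r ?invr_gt0 ?exprn_gt0 //.
by have := mulr_ge0 (sqr_ge0 t) Q_ge0; lra.
Qed.

Lemma tilt_dev_le (W y : R) : 1 <= W -> y ^+ 2 <= 8 / 3 ->
  `|expR y / W - 1| + (expR y / W - 1) <= `|y| + y + 3 * y ^+ 2.
Proof.
move=> W1 y2; have := sqr_ge0 y; have := ler_norm (- y); rewrite normrN.
have [u_lt0|u_ge0] := ltrP (expR y / W - 1) 0; first by rewrite (ltr0_norm u_lt0); lra.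
have u_le : expR y / W <= expR y by rewrite ler_pdivrMr ?ler_peMr ?expR_ge0 //; lra.
have y_ge0 : 0 <= y by rewrite leNgt -expR_lt1 -leNgt; lra.
by have := expR_le_quadratic y_ge0 y2; rewrite (ger0_norm u_ge0) (ger0_norm y_ge0); lra.
Qed.

End ExpBound.

Section WeightedMean.
Context {R : realType} {T : finType} (I : {set T}) (p : T -> R).
Hypotheses (p_ge0 : forall i, 0 <= p i) (p_sum1 : \sum_(i in I) p i = 1).

Definition wmean (x : T -> R) : R := \sum_(i in I) p i * x i.

Lemma wmeanD (x y : T -> R) : wmean (fun i => x i + y i) = wmean x + wmean y.
Proof. by rewrite /wmean -big_split; apply: eq_bigr => i _; rewrite mulrDr. Qed.

Lemma wmeanZ (c : R) (x : T -> R) : wmean (fun i => c * x i) = c * wmean x.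
Proof. by rewrite /wmean mulr_sumr; apply: eq_bigr => i _; rewrite mulrCA. Qed.

Lemma wmean_cst (c : R) : wmean (fun=> c) = c.
Proof. by rewrite /wmean -mulr_suml p_sum1 mul1r. Qed.

Lemma wmeanB_cst (x : T -> R) (c : R) : wmean (fun i => x i - c) = wmean x - c.
Proof. by rewrite wmeanD wmean_cst. Qed.

Lemma ler_wmean (x y : T -> R) : (forall i, i \in I -> x i <= y i) -> wmean x <= wmean y.
Proof. by move=> xy; apply: ler_sum => i iI; rewrite ler_wpM2l ?xy. Qed.

Lemma wmean_le (x : T -> R) (c : R) : (forall i, i \in I -> x i <= c) -> wmean x <= c.
Proof. by move=> xc; rewrite -[c]wmean_cst; apply: ler_wmean. Qed.

Lemma wmean_ge0 (x : T -> R) : (forall i, i \in I -> 0 <= x i) -> 0 <= wmean x.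
Proof. by move=> x0; rewrite -(wmean_cst 0); apply: ler_wmean. Qed.

Lemma wmean_centered (x : T -> R) : wmean (fun i => x i - wmean x) = 0.
Proof. by rewrite wmeanB_cst subrr. Qed.

Lemma wmean_sqr_centered (x : T -> R) :
  wmean (fun i => (x i - wmean x) ^+ 2) = wmean (fun i => x i ^+ 2) - wmean x ^+ 2.
Proof.
set m := wmean x.
rewrite {1}/wmean (eq_bigr (fun i => p i * x i ^+ 2 - 2 * m * (p i * x i) + m ^+ 2 * p i)).
  rewrite big_split sumrB /= -!mulr_sumr p_sum1 -/(wmean x) -/m.
  by rewrite -/(wmean (fun i => x i ^+ 2)); ring.
by move=> i _; ring.
Qed.

Lemma wmean_expR_ge1 (y : T -> R) : wmean y = 0 -> 1 <= wmean (fun i => expR (y i)).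
Proof.
move=> y0; rewrite -(wmean_cst 1) -[X in X <= _]addr0 -y0 -wmeanD.
by apply: ler_wmean => i _; exact: expR_ge1Dx.
Qed.

(* If 3 K >= 2 the bound is trivial, the left side being at most 2.  Otherwise
   |y i| <= 2 sqrt K < sqrt (8/3), where the quadratic bound on expR applies to
   the mean of |u| + u, equal to the left side since u := expR y / W - 1 has
   mean 0. *)
Lemma wmean_tilt_dev_le (y : T -> R) (K : R) :
  wmean y = 0 -> wmean (fun i => y i ^+ 2) <= K ->
  (forall i, i \in I -> y i ^+ 2 <= 4 * K) ->
  wmean (fun i => `|expR (y i) / wmean (fun j => expR (y j)) - 1|)
    <= wmean (fun i => `|y i|) + 3 * K.
Proof.
move=> y0 y2 yK; set W := wmean (fun j => expR (y j)).
have W1 : 1 <= W := wmean_expR_ge1 y0.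
have tilt_mean1 : wmean (fun i => expR (y i) / W) = 1.
  rewrite -(@divff _ W) ?gt_eqF ?(lt_le_trans ltr01) // /W /wmean mulr_suml.
  by apply: eq_bigr => i _; rewrite mulrA.
have absy_ge0 : 0 <= wmean (fun i => `|y i|) by apply: wmean_ge0.
have [K_big|K_small] := lerP 2 (3 * K).
  suff : wmean (fun i => `|expR (y i) / W - 1|) <= 2 by lra.
  apply: le_trans (_ : wmean (fun i => expR (y i) / W + 1) <= _).
    apply: ler_wmean => i _; apply: le_trans (ler_normB _ _) _.
    by rewrite normr1 ger0_norm // divr_ge0 ?expR_ge0 //; lra.
  by rewrite wmeanD wmean_cst tilt_mean1.
set u := fun i => expR (y i) / W - 1.
have u0 : wmean u = 0.
  by rewrite wmeanB_cst tilt_mean1 subrr.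
rewrite -[X in X <= _]addr0 -u0 -wmeanD.
apply: le_trans (_ : wmean (fun i => `|y i| + y i + 3 * y i ^+ 2) <= _).
  by apply: ler_wmean => i iI; apply: tilt_dev_le => //; have := yK i iI; lra.
by rewrite !wmeanD y0 addr0 wmeanZ lerD2l ler_pM2l.
Qed.

End WeightedMean.

Section Softmax.
Context {R : realType} {T : finType} (I : {set T}).
Implicit Types (z w : T -> R).

Definition softmax z (i : T) : R := expR (z i) / \sum_(j in I) expR (z j).

Lemma sum_expR_gt0 z : I != finset.set0 -> 0 < \sum_(j in I) expR (z j).
Proof.
case/set0Pn=> i iI; rewrite (bigD1 i) //= ltr_pwDl ?expR_gt0 //.
by apply: sumr_ge0 => j _; exact: expR_ge0.
Qed.

Lemma softmax_ge0 z i : 0 <= softmax z i.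
Proof. by rewrite divr_ge0 ?expR_ge0 ?sumr_ge0 // => j _; exact: expR_ge0. Qed.

Lemma softmax_sum1 z : I != finset.set0 -> \sum_(i in I) softmax z i = 1.
Proof. by move=> I0; rewrite -mulr_suml divff // gt_eqF ?sum_expR_gt0. Qed.

Lemma softmax_le1 z i : i \in I -> softmax z i <= 1.
Proof.
move=> iI; have I0 : I != finset.set0 by apply/set0Pn; exists i.
rewrite -(softmax_sum1 z I0) (bigD1 i) //= lerDl.
by apply: sumr_ge0 => j _; exact: softmax_ge0.
Qed.

Lemma softmax_tilt z w (c : R) i : I != finset.set0 ->
  softmax w i = softmax z i * expR (w i - z i - c)
                / wmean I (softmax z) (fun j => expR (w j - z j - c)).
Proof.
move=> I0; have tilt j : expR (z j) * expR (w j - z j - c) = expR (w j) * expR (- c).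
  by rewrite -!expRD; congr expR; ring.
have -> : wmean I (softmax z) (fun j => expR (w j - z j - c))
          = (\sum_(j in I) expR (w j)) * expR (- c) / \sum_(j in I) expR (z j).
  rewrite /wmean mulr_suml mulr_suml; apply: eq_bigr => j _.
  by rewrite /softmax mulrAC tilt mulrAC.
rewrite /softmax [expR (z i) / _ * _]mulrAC tilt; field.
by rewrite !gt_eqF ?expR_gt0 ?sum_expR_gt0.
Qed.

Lemma softmax_l1_dist_le z w (K : R) : I != finset.set0 ->
  (forall i, i \in I -> (w i - z i) ^+ 2 <= K) ->
  \sum_(i in I) `|softmax w i - softmax z i|
    <= wmean I (softmax z)
         (fun i => `|w i - z i - wmean I (softmax z) (fun j => w j - z j)|) + 3 * K.
Proof.
move=> I0 xK; set p := softmax z; set x := fun j => w j - z j; set m := wmean I p x.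
have p_ge0 : forall i, 0 <= p i by exact: softmax_ge0.
have p_sum1 : \sum_(i in I) p i = 1 by exact: softmax_sum1.
set y := fun i => x i - m.
have -> : \sum_(i in I) `|softmax w i - p i|
          = wmean I p (fun i => `|expR (y i) / wmean I p (fun j => expR (y j)) - 1|).
  apply: eq_bigr => i _; rewrite (softmax_tilt z w m i I0) -/p.
  by rewrite -mulrA -[X in `|_ - X|]mulr1 -mulrBr normrM ger0_norm.
have x2_le : wmean I p (fun i => x i ^+ 2) <= K by apply: wmean_le.
have m2_le : m ^+ 2 <= K.
  have := wmean_sqr_centered p_sum1 x; rewrite -/m => var.
  have : 0 <= wmean I p (fun i => (x i - m) ^+ 2) by apply: wmean_ge0 => // i _; exact: sqr_ge0.
  lra.
apply: wmean_tilt_dev_le => //.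
- exact: wmean_centered.
- by rewrite wmean_sqr_centered // -/m; have := sqr_ge0 m; lra.
- move=> i iI; have := xK i iI; rewrite -/(x i) /y => xiK.
  by have := sqr_ge0 (x i + m); nra.
Qed.

End Softmax.

Section MatrixForm.
Context {R : realType} {d : nat}.
Implicit Types (M : 'M[R]_d) (u v w : 'cV[R]_d).

Definition mxform M u v : R := (u^T *m M *m v) 0 0.

Lemma mxformBl M u v w : mxform M (u - v) w = mxform M u w - mxform M v w.
Proof. by rewrite /mxform linearB /= !mulmxBl !mxE. Qed.

Lemma mxformBr M u v w : mxform M w (u - v) = mxform M w u - mxform M w v.
Proof. by rewrite /mxform mulmxBr !mxE. Qed.

Lemma mxformZl M (c : R) u v : mxform M (c *: u) v = c * mxform M u v.
Proof. by rewrite /mxform linearZ /= -!scalemxAl mxE. Qed.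

Lemma mxformZr M (c : R) u v : mxform M u (c *: v) = c * mxform M u v.
Proof. by rewrite /mxform -scalemxAr mxE. Qed.

Lemma mxform_suml M (T : finType) (J : {set T}) (F : T -> 'cV[R]_d) v :
  mxform M (\sum_(j in J) F j) v = \sum_(j in J) mxform M (F j) v.
Proof. by rewrite /mxform linear_sum /= !mulmx_suml summxE. Qed.

Lemma mxformC M u v : M^T = M -> mxform M u v = mxform M v u.
Proof.
move=> M_sym; rewrite /mxform.
have -> : (u^T *m M *m v) 0 0 = (u^T *m M *m v)^T 0 0 by rewrite [RHS]mxE.
by rewrite !trmx_mul trmxK M_sym mulmxA.
Qed.

Lemma posdef_mxform_ge0 M u : posdef M -> 0 <= mxform M u u.
Proof.
case=> _ M_pos; have [->|u0] := eqVneq u 0; last exact: ltW (M_pos u u0).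
by rewrite /mxform mulmx0 mxE.
Qed.

Lemma posdef_unitmx M : posdef M -> M \in unitmx.
Proof.
case=> _ M_pos; rewrite unitmxE unitfE; apply/negP => /det0P[v v0 vM].
by have := M_pos v^T; rewrite trmx_eq0 trmxK vM mul0mx mxE ltxx => /(_ v0).
Qed.

Lemma mxform_CauchySchwarz M u v : posdef M ->
  mxform M u v ^+ 2 <= mxform M u u * mxform M v v.
Proof.
move=> M_pd; have [M_sym M_pos] := M_pd.
have [->|v0] := eqVneq v 0.
  by rewrite /mxform !mulmx0 !mxE expr0n mulr0.
set a := mxform M u u; set b := mxform M u v; set c := mxform M v v.
have c_gt0 : 0 < c := M_pos v v0.
have := posdef_mxform_ge0 (u - (b / c) *: v) M_pd.
rewrite !mxformBl !mxformBr !mxformZl !mxformZr (mxformC v u M_sym) -/a -/b -/c.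
have -> : a - b / c * b - (b / c * b - b / c * (b / c * c)) = (a * c - b ^+ 2) / c.
  by field; rewrite gt_eqF.
by rewrite pmulr_lge0 ?invr_gt0 // subr_ge0.
Qed.

(* Cauchy-Schwarz for the form of [M], applied to [M^-1 z] and [u]. *)
Lemma normr_dotv_le M z u : posdef M ->
  `|dotv z u| <= mnorm (invmx M) z * mnorm M u.
Proof.
move=> M_pd; have [M_sym _] := M_pd; have M_unit := posdef_unitmx M_pd.
set w := invmx M *m z.
have z_eq : z = M *m w by rewrite /w mulmxA mulmxV ?mul1mx.
have dotv_eq : dotv z u = mxform M w u by rewrite /dotv /mxform z_eq trmx_mul M_sym.
have norm_eq : mxform (invmx M) z z = mxform M w w.
  rewrite /mxform {1}z_eq trmx_mul M_sym -[w^T *m M *m invmx M]mulmxA mulmxV //.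
  by rewrite mulmx1 -mulmxA -z_eq.
rewrite /mnorm -/(mxform _ z z) -/(mxform M u u) norm_eq dotv_eq.
rewrite -sqrtrM ?posdef_mxform_ge0 // -sqrtr_sqr ler_sqrt ?mulr_ge0 ?posdef_mxform_ge0 //.
exact: mxform_CauchySchwarz.
Qed.

Lemma dotvE u v : dotv u v = mxform 1%:M u v.
Proof. by rewrite /dotv /mxform mulmx1. Qed.

Lemma dotvB_sumZl (T : finType) (J : {set T}) (c : T -> R) (F : T -> 'cV[R]_d) u v :
  dotv (u - \sum_(j in J) c j *: F j) v = dotv u v - \sum_(j in J) c j * dotv (F j) v.
Proof.
rewrite !dotvE mxformBl mxform_suml.
by under eq_bigr do rewrite mxformZl -dotvE; rewrite -dotvE.
Qed.

End MatrixForm.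

Section MNL.
Context {R : realType} {S A : finType} {d : nat}.
Variables (phi : S -> A -> S -> 'cV[R]_d) (Sset : S -> A -> {set S}).
Implicit Types (theta : 'cV[R]_d).

Lemma mnlE theta s a j : j \in Sset s a ->
  mnl phi Sset theta s a j = softmax (Sset s a) (fun k => dotv (phi s a k) theta) j.
Proof. by rewrite /mnl => ->. Qed.

Lemma mnl_out theta s a j : j \notin Sset s a -> mnl phi Sset theta s a j = 0.
Proof. by rewrite /mnl => /negbTE ->. Qed.

Lemma mnl_bounded theta s a j : 0 <= mnl phi Sset theta s a j <= 1.
Proof.
have [jI|jI] := boolP (j \in Sset s a); first by rewrite mnlE // softmax_ge0 softmax_le1.
by rewrite mnl_out // lexx ler01.
Qed.

Lemma mnl_sum1 theta s a : Sset s a != finset.set0 ->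
  \sum_(j in Sset s a) mnl phi Sset theta s a j = 1.
Proof.
move=> S0; rewrite -(softmax_sum1 (fun k => dotv (phi s a k) theta) S0).
by apply: eq_bigr => j; exact: mnlE.
Qed.

(* In [softmax_l1_dist_le] the first-order term gives the centred term of the
   confidence radius and the remainder its [3 beta^2] term. *)
Lemma mnl_in_polytope theta_star thetahat (Sigma : 'M[R]_d) (beta : R) :
  (forall s a, Sset s a != finset.set0) -> posdef Sigma ->
  mnorm Sigma (thetahat - theta_star) <= beta ->
  in_polytope phi Sset thetahat Sigma beta (mnl phi Sset theta_star).
Proof.
move=> Sset0 Sigma_pd err_le; split=> [s a j|s a]; first exact: mnl_bounded.
split; first exact: mnl_sum1.
set I := Sset s a; set delta := thetahat - theta_star.
set z := fun j => dotv (phi s a j) thetahat; set w := fun j => dotv (phi s a j) theta_star.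
set p := softmax I z.
have beta_ge0 : 0 <= beta := le_trans (sqrtr_ge0 _) err_le.
have dual_le u : `|dotv u delta| <= mnorm (invmx Sigma) u * beta.
  by apply: le_trans (normr_dotv_le _ _ Sigma_pd) _; rewrite ler_wpM2l ?sqrtr_ge0.
have gap j : w j - z j = - dotv (phi s a j) delta by rewrite /w /z /delta !dotvE mxformBr opprB.
set bm := \big[Num.max/0]_(j in I) mnorm (invmx Sigma) (phi s a j) ^+ 2.
have gap_le j : j \in I -> (w j - z j) ^+ 2 <= beta ^+ 2 * bm.
  move=> jI; rewrite gap sqrrN -real_normK ?num_real // mulrC.
  apply: le_trans (_ : (mnorm (invmx Sigma) (phi s a j) * beta) ^+ 2 <= _).
    by rewrite lerXn2r ?nnegrE ?mulr_ge0 ?sqrtr_ge0.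
  by rewrite exprMn ler_wpM2r ?sqr_ge0 //; apply: le_bigmax_cond.
rewrite (eq_bigr (fun j => `|softmax I w j - p j|)) => [|j jI]; last by rewrite !mnlE.
apply: le_trans (softmax_l1_dist_le (Sset0 s a) gap_le) _.
rewrite mulrA lerD2r /wmean mulr_sumr; apply: ler_sum => j jI.
rewrite mnlE // -/p mulrCA ler_wpM2l ?softmax_ge0 //.
have mean_phi : \sum_(k in I) mnl phi Sset thetahat s a k *: phi s a k
              = \sum_(k in I) p k *: phi s a k.
  by apply: eq_bigr => k kI; rewrite mnlE.
have centered : w j - z j - \sum_(k in I) p k * (w k - z k)
    = - dotv (phi s a j - \sum_(k in I) p k *: phi s a k) delta.
  rewrite dotvB_sumZl gap; under eq_bigr do rewrite gap mulrN.
  by rewrite sumrN; ring.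
by rewrite mean_phi centered normrN mulrC dual_le.
Qed.

End MNL.

Section Survival.
Context {R : realType} {S : finType}.
Variables (P : S -> S -> R) (g : S).
Hypothesis P_ge0 : forall x y, 0 <= P x y.

Lemma surv_ge0 n x : 0 <= surv P g n x.
Proof.
elim: n x => [|n IH] x /=; case: ifP => // _.
by apply: sumr_ge0 => y _; rewrite mulr_ge0.
Qed.

Lemma surv_target n : surv P g n g = 0.
Proof. by case: n => [|n] /=; rewrite eqxx. Qed.

Lemma sum_surv_le_hit_time n x : ((\sum_(j < n) surv P g j x)%:E <= hit_time P x g)%E.
Proof.
rewrite /hit_time -sumEFin -(big_mkord xpredT (fun j => (surv P g j x)%:E)).
by apply: nneseries_lim_ge => j _ _; rewrite lee_fin surv_ge0.
Qed.

Hypothesis P_sum1 : forall x, \sum_y P x y = 1.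

Lemma sum_surv_step n x (c : R) : x != g ->
  \sum_y P x y * (c - \sum_(j < n) surv P g j y) = c - \sum_(j < n) surv P g j.+1 x.
Proof.
move=> xg; rewrite (eq_bigr (fun y => P x y * c - \sum_(j < n) P x y * surv P g j y)).
  by rewrite sumrB -mulr_suml P_sum1 mul1r exchange_big /= (negbTE xg).
by move=> y _; rewrite mulrBr mulr_sumr.
Qed.

End Survival.

Section DEVI.
Context {R : realType} {S A : finType}.
Variables (r : S -> A -> R) (Sset : S -> A -> {set S})
  (P : (S -> A -> S -> R) -> Prop) (gamma : R) (pstar : S -> A -> S -> R).
Hypotheses (r_bounded : forall s a, 0 <= r s a <= 1) (gamma_bounded : 0 <= gamma < 1).
Hypothesis P_bounded : forall p, P p -> forall s a s', 0 <= p s a s' <= 1.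
Hypothesis P_sum1 : forall p, P p -> forall s a, \sum_(s' in Sset s a) p s a s' = 1.
Hypotheses (P_pstar : P pstar) (pstar_out : forall s a s', s' \notin Sset s a -> pstar s a s' = 0).

Let Q n := devi_Q r Sset P gamma n.
Let V n := devi_V r Sset P gamma n.
Let backup (W : S -> R) s a :=
  sup [set x : R | exists p, P p /\ x = \sum_(s' in Sset s a) p s a s' * W s']%classic.

Let devi_QS n s a : Q n.+1 s a = r s a + gamma * backup (V n) s a.
Proof. by []. Qed.

Lemma backup_ge W s a p : P p -> \sum_(s' in Sset s a) p s a s' * W s' <= backup W s a.
Proof.
move=> Pp; apply: ub_le_sup; last by exists p.
exists (\sum_(s' in Sset s a) `|W s'|) => _ [q [Pq ->]]; apply: ler_sum => s' _.
have /andP[q_ge0 q_le1] := P_bounded Pq s a s'.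
by apply: le_trans (ler_norm _) _; rewrite normrM ger0_norm // ler_piMl.
Qed.

Lemma backup_le W s a (c : R) :
  (forall p, P p -> \sum_(s' in Sset s a) p s a s' * W s' <= c) -> backup W s a <= c.
Proof.
move=> Wc; apply: ge_sup => [|_ [p [Pp ->]]]; last exact: Wc.
by exists (\sum_(s' in Sset s a) pstar s a s' * W s'), pstar.
Qed.

Lemma backup_le_cst W s a (c : R) : (forall s', W s' <= c) -> backup W s a <= c.
Proof.
move=> Wc; apply: backup_le => p Pp; rewrite -[c]mul1r -(P_sum1 Pp s a) mulr_suml.
by apply: ler_sum => s' _; rewrite ler_wpM2l ?Wc //; case/andP: (P_bounded Pp s a s').
Qed.

Lemma backup_homo W1 W2 s a : (forall s', W1 s' <= W2 s') -> backup W1 s a <= backup W2 s a.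
Proof.
move=> W12; apply: backup_le => p Pp; apply: le_trans (backup_ge W2 s a Pp).
by apply: ler_sum => s' _; rewrite ler_wpM2l ?W12 //; case/andP: (P_bounded Pp s a s').
Qed.

Lemma devi_Q_le_V n s a : Q n s a <= V n s.
Proof. exact: le_bigmax. Qed.

Let inv_1Bgamma_ge0 : 0 <= (1 - gamma)^-1.
Proof. by rewrite invr_ge0; case/andP: gamma_bounded => _ g1; lra. Qed.

Lemma devi_Q_decr n s a : Q n.+1 s a <= Q n s a.
Proof.
have [g0 g1] := andP gamma_bounded.
elim: n s a => [|n IH] s a; rewrite devi_QS.
  have [r0 r1] := andP (r_bounded s a).
  have backup_le1 : backup (V 0) s a <= (1 - gamma)^-1.
    by apply: backup_le_cst => s'; apply: bigmax_le => // a' _; rewrite /= div1r.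
  have -> : Q 0 s a = 1 + gamma * (1 - gamma)^-1 by rewrite /Q /= div1r; field; lra.
  by rewrite lerD // ler_wpM2l.
by rewrite devi_QS lerD2l ler_wpM2l // backup_homo // => s'; apply: le_bigmax2.
Qed.

Lemma devi_V_decr n s : V n.+1 s <= V n s.
Proof. by apply: le_bigmax2 => a _; exact: devi_Q_decr. Qed.

Lemma devi_V_le n s : V n s <= (1 - gamma)^-1.
Proof.
elim: n s => [|n IH] s; last exact: le_trans (devi_V_decr n s) (IH s).
by apply: bigmax_le => // a _; rewrite /= div1r.
Qed.

Variable pi : S -> A.
Let Ppi x y := pstar x (pi x) y.

Let Ppi_ge0 x y : 0 <= Ppi x y.
Proof. by case/andP: (P_bounded P_pstar x (pi x) y). Qed.

Let sum_Ppi x (W : S -> R) :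
  \sum_y Ppi x y * W y = \sum_(y in Sset x (pi x)) pstar x (pi x) y * W y.
Proof.
rewrite [RHS]big_mkcond; apply: eq_bigr => y _.
by case: ifPn => // /pstar_out; rewrite /Ppi => ->; rewrite mul0r.
Qed.

Let Ppi_sum1 x : \sum_y Ppi x y = 1.
Proof.
rewrite -(P_sum1 P_pstar x (pi x)) [RHS]big_mkcond; apply: eq_bigr => y _.
by case: ifPn => // /pstar_out.
Qed.

Lemma devi_V_ge_policy n x :
  r x (pi x) + gamma * \sum_y Ppi x y * V n y <= V n.+1 x.
Proof.
apply: le_trans (devi_Q_le_V _ _ (pi x)); rewrite devi_QS lerD2l.
apply: ler_wpM2l; first by case/andP: gamma_bounded.
by rewrite sum_Ppi; exact: backup_ge.
Qed.

(* Under [pi], the value can fall by at most one unit per step spent away from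
   [g]: [V^(n+1) g - gamma V^(n) g <= (1 - gamma) V^(n+1) g <= 1]. *)
Lemma devi_V_sub_surv_le g n x : V n g - \sum_(j < n) surv Ppi g j x <= V n x.
Proof.
have [g0 g1] := andP gamma_bounded.
elim: n x => [|n IH] x; first by rewrite big_ord0 subr0.
have [->|xg] := eqVneq x g; first by rewrite big1 ?subr0 // => j _; exact: surv_target.
rewrite big_ord_recl [surv _ _ ord0 _]/= (negbTE xg); under eq_bigr do rewrite lift0.
set Sx := \sum_(j < n) _.
have Sx_ge0 : 0 <= Sx by apply: sumr_ge0 => j _; exact: surv_ge0 g Ppi_ge0 _ _.
have step : gamma * (V n g - Sx) <= gamma * \sum_y Ppi x y * V n y.
  rewrite -(sum_surv_step Ppi_sum1 n (V n g) xg) ler_wpM2l //.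
  by apply: ler_sum => y _; rewrite ler_wpM2l.
have V_le1 : (1 - gamma) * V n.+1 g <= 1.
  by rewrite -ler_pdivlMl ?subr_gt0 // mulr1 devi_V_le.
have gV_decr : gamma * V n.+1 g <= gamma * V n g by rewrite ler_wpM2l ?devi_V_decr.
have gSx_le : gamma * Sx <= Sx by rewrite ler_piMl // ltW.
have := devi_V_ge_policy n x; have := r_bounded x (pi x).
move: step V_le1; rewrite mulrBr mulrBl; lra.
Qed.

End DEVI.

Section Diameter.
Context {R : realType} {S A : finType}.
Variable p : S -> A -> S -> R.
Local Open Scope ereal_scope.

Lemma diameter_ge0 : 0 <= diameter p.
Proof. exact: bigmax_ge_id. Qed.

Lemma diameter_hit_time s g (D : R) : diameter p <= D%:E -> s != g ->
  exists pi : {ffun S -> A}, hit_time (fun x y => p x (pi x) y) s g <= D%:E.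
Proof.
move=> pD sg; apply: contrapT => /forallNP no_pi.
have : D%:E < \big[Order.min/+oo]_(pi : {ffun S -> A}) hit_time (fun x y => p x (pi x) y) s g.
  apply/bigmin_gtP; split=> [|pi _]; first exact: ltey.
  by rewrite ltNge; apply/negP; exact: no_pi.
rewrite ltNge => /negP; apply; apply: le_trans pD.
by apply: (bigmax_sup s) => //; apply: (bigmax_sup g); rewrite // eq_sym.
Qed.

End Diameter.

Theorem lemma7 (R : realType) (S A : finType) (d : nat)
  (phi : S -> A -> S -> 'cV[R]_d) (Sset : S -> A -> {set S})
  (r : S -> A -> R) (theta_star : 'cV[R]_d) (L_theta : R)
  (thetahat : nat -> 'cV[R]_d) (Sigma : nat -> 'M[R]_d) (beta : nat -> R)
  (T : nat) (gamma : R) (N : nat) (D : R) (t_k : nat) :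
  (forall s a, Sset s a != finset.set0) ->
  (forall s a, 0 <= r s a <= 1) ->
  0 <= gamma < 1 ->
  norm2 theta_star <= L_theta ->
  (forall t, (1 <= t <= T)%N -> posdef (Sigma t)) ->
  (forall t, (1 <= t <= T)%N -> mnorm (Sigma t) (thetahat t - theta_star) <= beta t) ->
  (diameter (mnl phi Sset theta_star) <= D%:E)%E ->
  (1 <= t_k <= T)%N ->
  forall s s' : S,
    devi_V r Sset (in_polytope phi Sset (thetahat t_k) (Sigma t_k) (beta t_k)) gamma N s
    - devi_V r Sset (in_polytope phi Sset (thetahat t_k) (Sigma t_k) (beta t_k)) gamma N s'
    <= D.
Proof.
move=> Sset0 r_bounded gamma_bounded _ Sigma_pd err_le diam_le tk_range s s'.
set P := in_polytope _ _ _ _ _; set pstar := mnl phi Sset theta_star.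
have P_pstar : P pstar :=
  mnl_in_polytope phi Sset0 (Sigma_pd _ tk_range) (err_le _ tk_range).
have P_bounded p : P p -> forall s a s', 0 <= p s a s' <= 1 by case.
have P_sum1 p : P p -> forall s a, \sum_(s' in Sset s a) p s a s' = 1.
  by move=> [_ Pp] s0 a; case: (Pp s0 a).
have pstar_out s0 a s0' : s0' \notin Sset s0 a -> pstar s0 a s0' = 0 by exact: mnl_out.
have [<-|ss'] := eqVneq s s'.
  by rewrite subrr -lee_fin; apply: le_trans (diameter_ge0 _) diam_le.
have s's : s' != s by rewrite eq_sym.
have [pi hit_le] := diameter_hit_time diam_le s's.
have := devi_V_sub_surv_le r_bounded gamma_bounded P_bounded P_sum1 P_pstar pstar_out pi s N s'.
have Ppi_ge0 x y : 0 <= pstar x (pi x) y by case/andP: (P_bounded _ P_pstar x (pi x) y).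
have := le_trans (sum_surv_le_hit_time s Ppi_ge0 N s') hit_le.
rewrite lee_fin /devi_V; lra.
Qed.
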